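(* Let $v$ be a scalar-valued function on an open set $\Omega\subseteq\mathbb{R}^n$ ($n>1$), and let $\phi_1,\phi_2$ be scalar-valued functions on $\Omega$ such that $\underline{g}=\partial_{\underline{x}}\phi_1$ and $\underline{h}=\partial_{\underline{x}}\phi_2$ are two particular vector-valued solutions of the Clifford Riccati equation $\partial_{\underline{x}} f + f^2 = v$. For $K\in\mathbb{C}$ put $\alpha=K\exp(\phi_1-\phi_2)$. Then \[\underline{f}=\frac{\alpha\,\underline{g}-\underline{h}}{\alpha-1}\] is also a (vector-valued) solution of $\partial_{\underline{x}} f + f^2 = v$ (wherever $\alpha\neq 1$).
   Context: $\mathbb{R}_{0,n}$ is the real Clifford algebra generated by an orthonormal basis $e_1,\dots,e_n$ of $\mathbb{R}^n$ with relations $e_je_k+e_ke_j=-2\delta_{jk}$; $\mathbb{C}_n=\mathbb{R}_{0,n}\otimes\mathbb{C}$. The Dirac operator is $\partial_{\underline{x}}=\sum_{j=1}^n e_j\partial_{x_j}$, acting from the left on Clifford-valued functions. *)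

From HB Require Import structures.
From mathcomp Require Import all_boot all_order all_algebra.
From mathcomp Require Import all_classical all_reals all_analysis.
From mathcomp Require Import complex.
Set Implicit Arguments. Unset Strict Implicit. Unset Printing Implicit Defensive.
Import Order.TTheory GRing.Theory Num.Theory.
Import numFieldNormedType.Exports.
Local Open Scope ring_scope.

Section Clifford.
Variables (R : realType) (n : nat).
Local Notation C := (R[i]).

(* The complex Clifford algebra C_n = R_{0,n} (x) C, represented by its
   coordinates on the basis blades e_A = e_{a1} ... e_{ak}, a1 < ... < ak,
   A ranging over subsets of {0,..,n-1}. *)
Definition cliff := {ffun {set 'I_n} -> C}.

(* e_A e_B = (-1)^(inv(A,B) + #|A /\ B|) e_{A \triangle B}, where inv(A,B) is
   the number of pairs a in A, b in B with b < a (reordering) and each common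
   generator contributes e_j^2 = -1. *)
Definition cl_blade_inv (A B : {set 'I_n}) : nat :=
  #|[set p : ('I_n * 'I_n)%type | (p.1 \in A) && (p.2 \in B) && (p.2 < p.1)%N]|.

Definition cl_blade_sign (A B : {set 'I_n}) : C :=
  (-1) ^+ (cl_blade_inv A B + #|A :&: B|).

Definition cl_symdiff (A B : {set 'I_n}) := (A :\: B) :|: (B :\: A).

Definition cl_mul (a b : cliff) : cliff :=
  [ffun D => \sum_(A : {set 'I_n}) \sum_(B : {set 'I_n} | cl_symdiff A B == D)
               cl_blade_sign A B * a A * b B].

Definition cl_scal (c : C) : cliff := [ffun A => if A == finset.set0 then c else 0].
Definition cl_scale (c : C) (a : cliff) : cliff := [ffun A => c * a A].
Definition cl_gen (j : 'I_n) : cliff := [ffun A => if A == finset.set1 j then 1 else 0].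
Definition cl_is_vector (a : cliff) : Prop := forall A : {set 'I_n}, #|A| != 1%N -> a A = 0.

Definition cl_dirj (j : 'I_n) : 'rV[R]_n := delta_mx 0 j.
Definition cl_cderivable (u : 'rV[R]_n -> C) (x : 'rV[R]_n) (j : 'I_n) : Prop :=
  derivable (fun y => complex.Re (u y)) x (cl_dirj j) /\ derivable (fun y => complex.Im (u y)) x (cl_dirj j).
Definition cl_cpartial (j : 'I_n) (u : 'rV[R]_n -> C) (x : 'rV[R]_n) : C :=
  Complex ('D_(cl_dirj j) (fun y => complex.Re (u y)) x) ('D_(cl_dirj j) (fun y => complex.Im (u y)) x).

Definition cl_derivable (F : 'rV[R]_n -> cliff) (x : 'rV[R]_n) (j : 'I_n) : Prop :=
  forall A : {set 'I_n}, cl_cderivable (fun y => F y A) x j.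
Definition cl_partial (j : 'I_n) (F : 'rV[R]_n -> cliff) (x : 'rV[R]_n) : cliff :=
  [ffun A => cl_cpartial j (fun y => F y A) x].

Definition dirac_op (F : 'rV[R]_n -> cliff) (x : 'rV[R]_n) : cliff :=
  \sum_(j < n) cl_mul (cl_gen j) (cl_partial j F x).

Definition riccati_at (v : 'rV[R]_n -> C) (F : 'rV[R]_n -> cliff) (x : 'rV[R]_n) : Prop :=
  (forall j, cl_derivable F x j) /\ dirac_op F x + cl_mul (F x) (F x) = cl_scal (v x).

End Clifford.

Definition cl_exp (R : realType) (z : R[i]) : R[i] :=
  Complex (expR (complex.Re z) * cos (complex.Im z)) (expR (complex.Re z) * sin (complex.Im z)).

(* Write W := alpha g - h and s := (alpha - 1)^-1, so that f = s W.  Since alpha and s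
   are scalar functions, the Dirac operator obeys Leibniz' rule
   D (s W) = (grad s) W + s D W and D (alpha g) = (grad alpha) g + alpha D g, where the
   gradient of a scalar function is the vector of its partial derivatives.  As g and h
   are the gradients of phi1 and phi2, grad alpha = alpha (g - h) and
   grad s = - s^2 alpha (g - h).  Substituting D g = v - g^2 and D h = v - h^2, the
   Riccati defect D f + f^2 - v becomes (s (alpha - 1) - 1) (alpha s h g - s h^2 + v),
   which vanishes; g and h never need to commute. *)

From HB Require Import structures.
From mathcomp Require Import all_boot all_order all_algebra.
From mathcomp Require Import all_classical all_reals all_analysis.
From mathcomp Require Import complex.
From mathcomp Require Import ring.
Import Order.TTheory GRing.Theory Num.Theory.
Import numFieldNormedType.Exports.
Local Open Scope ring_scope.
Set Implicit Arguments. Unset Strict Implicit.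

Section DirectionalDerivative.
Context {R : realType} {V : normedModType R}.
Implicit Types (f : V -> R) (x v : V).

Lemma derive_along_line f x v : 'D_v f x = 'D_1 (fun t : R => f (t *: v + x)) 0.
Proof.
rewrite /derive; set g1 := fun h => h^-1 *: _; set g2 := fun h => h^-1 *: _.
suff -> : g1 = g2 by [].
rewrite funeqE /g1 /g2 => t /=.
by rewrite addr0 scale0r add0r [_%:A]mulr1.
Qed.

Lemma is_derive_dir_comp f (G : R -> R) x v df dG :
  is_derive x v f df -> is_derive (f x) 1 G dG ->
  is_derive x v (fun y => G (f y)) (dG * df).
Proof.
move=> [fv <-] [Gv <-].
have line : is_derive (0 : R) 1 (fun t : R => f (t *: v + x)) ('D_v f x).
  by split; [exact/(derivable1P f x v) | rewrite derive_along_line].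
have G0 : is_derive ((fun t : R => f (t *: v + x)) 0) 1 G ('D_1 G (f x)).
  by rewrite /= scale0r add0r; split.
have [comp_v comp_D] := is_derive1_comp G0 line.
split; first exact/(derivable1P (fun y => G (f y)) x v).
by rewrite derive_along_line.
Qed.

Lemma is_derive_inv f x v df : f x != 0 -> is_derive x v f df ->
  is_derive x v (fun y => (f y)^-1) (- (f x)^-2 * df).
Proof. by move=> fx0 [fv <-]; split; [exact: derivableV | rewrite deriveV]. Qed.

End DirectionalDerivative.

Section ComplexParts.
Context {R : realType}.
Implicit Types z w : R[i].

Lemma ReD z w : complex.Re (z + w) = complex.Re z + complex.Re w. Proof. by case: z; case: w. Qed.
Lemma ImD z w : complex.Im (z + w) = complex.Im z + complex.Im w. Proof. by case: z; case: w. Qed.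
Lemma ReN z : complex.Re (- z) = - complex.Re z. Proof. by case: z. Qed.
Lemma ImN z : complex.Im (- z) = - complex.Im z. Proof. by case: z. Qed.
Lemma ReM z w : complex.Re (z * w) = complex.Re z * complex.Re w - complex.Im z * complex.Im w.
Proof. by case: z; case: w. Qed.
Lemma ImM z w : complex.Im (z * w) = complex.Re z * complex.Im w + complex.Im z * complex.Re w.
Proof. by case: z => a b; case: w => c d /=; rewrite addrC. Qed.
Lemma ReV z : complex.Re z^-1 = complex.Re z / (complex.Re z ^+ 2 + complex.Im z ^+ 2).
Proof. by case: z. Qed.
Lemma ImV z : complex.Im z^-1 = - (complex.Im z / (complex.Re z ^+ 2 + complex.Im z ^+ 2)).
Proof. by case: z. Qed.
Lemma complex_eta z : z = Complex (complex.Re z) (complex.Im z). Proof. by case: z. Qed.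

End ComplexParts.

Section ComplexDerivative.
Context {R : realType} {V : normedModType R}.
Local Notation C := R[i].
Implicit Types (u w : V -> C) (c d : C) (x v : V).

Definition is_cderive x v u c :=
  is_derive x v (fun y => complex.Re (u y)) (complex.Re c) /\
  is_derive x v (fun y => complex.Im (u y)) (complex.Im c).

Lemma is_cderive_cst (k : C) x v : is_cderive x v (fun=> k) 0.
Proof. by split; apply: is_derive_cst. Qed.

Lemma is_cderiveD x v u w c d : is_cderive x v u c -> is_cderive x v w d ->
  is_cderive x v (fun y => u y + w y) (c + d).
Proof.
move=> [ur ui] [wr wi]; split.
- under eq_fun do rewrite ReD; rewrite ReD; exact: is_deriveD.
- under eq_fun do rewrite ImD; rewrite ImD; exact: is_deriveD.
Qed.

Lemma is_cderiveN x v u c : is_cderive x v u c -> is_cderive x v (fun y => - u y) (- c).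
Proof.
move=> [ur ui]; split.
- under eq_fun do rewrite ReN; rewrite ReN; exact: is_deriveN.
- under eq_fun do rewrite ImN; rewrite ImN; exact: is_deriveN.
Qed.

Lemma is_cderiveB x v u w c d : is_cderive x v u c -> is_cderive x v w d ->
  is_cderive x v (fun y => u y - w y) (c - d).
Proof. by move=> du dw; apply: is_cderiveD du (is_cderiveN dw). Qed.

Lemma is_cderiveM x v u w c d : is_cderive x v u c -> is_cderive x v w d ->
  is_cderive x v (fun y => u y * w y) (c * w x + u x * d).
Proof.
move=> [ur ui] [wr wi]; split.
- under eq_fun do rewrite ReM.
  have := is_deriveB (is_deriveM ur wr) (is_deriveM ui wi).
  by congr is_derive; rewrite ReD !ReM /GRing.scale /=; ring.
- under eq_fun do rewrite ImM.
  have := is_deriveD (is_deriveM ur wi) (is_deriveM ui wr).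
  by congr is_derive; rewrite ImD !ImM /GRing.scale /=; ring.
Qed.

Lemma is_cderiveV x v u c : u x != 0 -> is_cderive x v u c ->
  is_cderive x v (fun y => (u y)^-1) (- (c * (u x)^-2)).
Proof.
move=> ux0 [ur ui].
pose N y := complex.Re (u y) ^+ 2 + complex.Im (u y) ^+ 2.
have N0 : N x != 0.
  apply: contra ux0; rewrite /N (complex_eta (u x)).
  by rewrite paddr_eq0 ?sqr_ge0 // !sqrf_eq0 => /andP[/eqP -> /eqP ->].
have dN := is_deriveD (is_deriveX 2 ur) (is_deriveX 2 ui).
have dNV := is_derive_inv N0 dN.
move: N0; rewrite /N => N0.
split.
- under eq_fun do rewrite ReV.
  have := is_deriveM ur dNV.
  congr is_derive.
  rewrite ReN (ReM c) ReV ImV (expr2 (u x)) (ReM (u x)) (ImM (u x)) /GRing.scale /N /=.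
  move: N0; move: (complex.Re (u x)) (complex.Im (u x)) (complex.Re c) (complex.Im c) => a b p q N0.
  have -> : (a * a - b * b) ^+ 2 + (a * b + b * a) ^+ 2 = (a ^+ 2 + b ^+ 2) ^+ 2 by ring.
  by field.
- under eq_fun do rewrite ImV.
  have := is_deriveN (is_deriveM ui dNV).
  congr is_derive.
  rewrite ImN (ImM c) ReV ImV (expr2 (u x)) (ReM (u x)) (ImM (u x)) /GRing.scale /N /=.
  move: N0; move: (complex.Re (u x)) (complex.Im (u x)) (complex.Re c) (complex.Im c) => a b p q N0.
  have -> : (a * a - b * b) ^+ 2 + (a * b + b * a) ^+ 2 = (a ^+ 2 + b ^+ 2) ^+ 2 by ring.
  by field.
Qed.

Lemma is_cderive_exp x v u c : is_cderive x v u c ->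
  is_cderive x v (fun y => cl_exp (u y)) (cl_exp (u x) * c).
Proof.
move=> [ur ui].
have dexp := is_derive_dir_comp ur (is_derive_expR (complex.Re (u x))).
have dcos := is_derive_dir_comp ui (is_derive_cos (complex.Im (u x))).
have dsin := is_derive_dir_comp ui (is_derive_sin (complex.Im (u x))).
split.
- have := is_deriveM dexp dcos; congr is_derive; rewrite ReM /GRing.scale /=; ring.
- have := is_deriveM dexp dsin; congr is_derive; rewrite ImM /GRing.scale /=; ring.
Qed.

End ComplexDerivative.

Section CliffordAlgebra.
Context {R : realType} {n : nat}.
Local Notation C := R[i].
Local Notation cl := (cliff R n).
Implicit Types (a b c : cl) (k l : C).

Lemma cl_scaleA k l a : cl_scale k (cl_scale l a) = cl_scale (k * l) a.
Proof. by apply/ffunP => A; rewrite !ffunE mulrA. Qed.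

Lemma cl_scaleN1 a : cl_scale (-1) a = - a.
Proof. by apply/ffunP => A; rewrite !ffunE mulN1r. Qed.

Lemma cl_scale_sumr k (F : 'I_n -> cl) :
  cl_scale k (\sum_j F j) = \sum_j cl_scale k (F j).
Proof.
apply/ffunP => A; rewrite ffunE !sum_ffunE mulr_sumr.
by apply: eq_bigr => j _; rewrite ffunE.
Qed.

Lemma cl_mulDl a b c : cl_mul (a + b) c = cl_mul a c + cl_mul b c.
Proof.
apply/ffunP => D; rewrite !ffunE -big_split; apply: eq_bigr => A _.
by rewrite -big_split; apply: eq_bigr => B _; rewrite !ffunE mulrDr mulrDl.
Qed.

Lemma cl_mulDr a b c : cl_mul a (b + c) = cl_mul a b + cl_mul a c.
Proof.
apply/ffunP => D; rewrite !ffunE -big_split; apply: eq_bigr => A _.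
by rewrite -big_split; apply: eq_bigr => B _; rewrite !ffunE mulrDr.
Qed.

Lemma cl_mulZl k a b : cl_mul (cl_scale k a) b = cl_scale k (cl_mul a b).
Proof.
apply/ffunP => D; rewrite !ffunE mulr_sumr; apply: eq_bigr => A _.
by rewrite mulr_sumr; apply: eq_bigr => B _; rewrite !ffunE; ring.
Qed.

Lemma cl_mulZr k a b : cl_mul a (cl_scale k b) = cl_scale k (cl_mul a b).
Proof.
apply/ffunP => D; rewrite !ffunE mulr_sumr; apply: eq_bigr => A _.
by rewrite mulr_sumr; apply: eq_bigr => B _; rewrite !ffunE; ring.
Qed.

Lemma cl_mulBl a b c : cl_mul (a - b) c = cl_mul a c - cl_mul b c.
Proof. by rewrite cl_mulDl -!cl_scaleN1 cl_mulZl. Qed.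

Lemma cl_mulBr a b c : cl_mul a (b - c) = cl_mul a b - cl_mul a c.
Proof. by rewrite cl_mulDr -!cl_scaleN1 cl_mulZr. Qed.

Lemma cl_mul_suml (F : 'I_n -> cl) b : cl_mul (\sum_j F j) b = \sum_j cl_mul (F j) b.
Proof.
apply: (big_morph (fun a => cl_mul a b)) => [a c|]; first exact: cl_mulDl.
by apply/ffunP => D; rewrite !ffunE big1 // => A _; rewrite big1 // => B _; rewrite ffunE mulr0 mul0r.
Qed.

Lemma cl_mul_scalr a k : cl_mul a (cl_scal n k) = cl_scale k a.
Proof.
apply/ffunP => D; rewrite !ffunE (bigD1 D) //= [X in _ + X]big1 => [|A AD]; last first.
  rewrite big_mkcond big1 // => B _; rewrite ffunE.
  case: (eqVneq B finset.set0) => [-> | _]; last by rewrite mulr0 if_same.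
  by rewrite /cl_symdiff finset.setD0 finset.set0D finset.setU0 (negbTE AD).
rewrite addr0 big_mkcond (bigD1 finset.set0) //= [X in _ + X]big1 => [|B B0]; last first.
  by rewrite ffunE (negbTE B0) mulr0 if_same.
rewrite ffunE eqxx /cl_symdiff finset.setD0 finset.set0D finset.setU0 eqxx addr0 mulrC.
rewrite /cl_blade_sign /cl_blade_inv finset.setI0 cards0 addn0.
suff -> : [set p : 'I_n * 'I_n | (p.1 \in D) && (p.2 \in finset.set0) && (p.2 < p.1)%N] = finset.set0.
  by rewrite cards0 expr0 mul1r.
by apply/finset.setP => p; rewrite !inE andbF.
Qed.

Definition cl_vec (c : 'I_n -> C) : cl := \sum_j cl_scale (c j) (cl_gen R j).

Lemma cl_vec_is_vector (c : 'I_n -> C) : cl_is_vector (cl_vec c).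
Proof.
move=> A hA; rewrite sum_ffunE big1 // => j _; rewrite !ffunE.
by case: eqP => [eA | _]; [rewrite eA cards1 in hA | rewrite mulr0].
Qed.

Lemma cl_vecZ k (c : 'I_n -> C) : cl_scale k (cl_vec c) = cl_vec (fun j => k * c j).
Proof. by rewrite cl_scale_sumr; apply: eq_bigr => j _; rewrite cl_scaleA. Qed.

Lemma cl_vecB (c d : 'I_n -> C) : cl_vec c - cl_vec d = cl_vec (fun j => c j - d j).
Proof.
rewrite -sumrB; apply: eq_bigr => j _.
by apply/ffunP => A; rewrite !ffunE mulrBl.
Qed.

End CliffordAlgebra.

Section DiracOperator.
Context {R : realType} {n : nat}.
Local Notation C := R[i].
Local Notation cl := (cliff R n).
Local Notation rV := 'rV[R]_n.
Local Notation dir := (cl_dirj R).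
Implicit Types (u s : rV -> C) (F G : rV -> cl) (x : rV) (j : 'I_n).

Lemma cderivableP u x j : cl_cderivable u x j -> is_cderive x (dir j) u (cl_cpartial j u x).
Proof. by case=> ur ui; split; apply: derivableP. Qed.

Lemma ex_cderive u x j c : is_cderive x (dir j) u c -> cl_cderivable u x j.
Proof. by case=> -[ur _] [ui _]. Qed.

Lemma cpartial_val u x j c : is_cderive x (dir j) u c -> cl_cpartial j u x = c.
Proof. by case=> -[_ Dre] [_ Dim]; rewrite /cl_cpartial Dre Dim -complex_eta. Qed.

Definition is_clpartial F x j (P : cl) :=
  forall A, is_cderive x (dir j) (fun y => F y A) (P A).

Lemma cl_derivableP F x j : cl_derivable F x j -> is_clpartial F x j (cl_partial j F x).
Proof. by move=> dF A; rewrite ffunE; apply: cderivableP. Qed.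

Lemma ex_clpartial F x j P : is_clpartial F x j P -> cl_derivable F x j.
Proof. by move=> dF A; apply: ex_cderive (dF A). Qed.

Lemma clpartial_val F x j P : is_clpartial F x j P -> cl_partial j F x = P.
Proof. by move=> dF; apply/ffunP => A; rewrite ffunE (cpartial_val (dF A)). Qed.

Lemma is_clpartialZ s F x j c P : is_cderive x (dir j) s c -> is_clpartial F x j P ->
  is_clpartial (fun y => cl_scale (s y) (F y)) x j (cl_scale c (F x) + cl_scale (s x) P).
Proof.
move=> ds dF A; rewrite !ffunE; under eq_fun do rewrite ffunE.
exact: is_cderiveM ds (dF A).
Qed.

Lemma is_clpartialB F G x j P Q : is_clpartial F x j P -> is_clpartial G x j Q ->
  is_clpartial (fun y => F y - G y) x j (P - Q).
Proof.
move=> dF dG A; rewrite !ffunE; under eq_fun do rewrite !ffunE.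
exact: is_cderiveB (dF A) (dG A).
Qed.

Lemma is_clpartial_scal u x j c : is_cderive x (dir j) u c ->
  is_clpartial (fun y => cl_scal n (u y)) x j (cl_scal n c).
Proof.
move=> du A; rewrite ffunE; under eq_fun do rewrite ffunE.
by case: ifP => _; [exact: du | exact: is_cderive_cst].
Qed.

Lemma cl_derivableZ s F x j c : is_cderive x (dir j) s c -> cl_derivable F x j ->
  cl_derivable (fun y => cl_scale (s y) (F y)) x j.
Proof. by move=> ds /cl_derivableP dF; apply: ex_clpartial (is_clpartialZ ds dF). Qed.

Lemma cl_derivableB F G x j : cl_derivable F x j -> cl_derivable G x j ->
  cl_derivable (fun y => F y - G y) x j.
Proof.
by move=> /cl_derivableP dF /cl_derivableP dG; apply: ex_clpartial (is_clpartialB dF dG).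
Qed.

Lemma dirac_op_scal u x (c : 'I_n -> C) : (forall j, is_cderive x (dir j) u (c j)) ->
  dirac_op (fun y => cl_scal n (u y)) x = cl_vec c.
Proof.
move=> du; apply: eq_bigr => j _.
by rewrite (clpartial_val (is_clpartial_scal (du j))) cl_mul_scalr.
Qed.

Lemma dirac_opZ s F x (c : 'I_n -> C) :
  (forall j, is_cderive x (dir j) s (c j)) -> (forall j, cl_derivable F x j) ->
  dirac_op (fun y => cl_scale (s y) (F y)) x =
  cl_mul (cl_vec c) (F x) + cl_scale (s x) (dirac_op F x).
Proof.
move=> ds dF; rewrite /dirac_op cl_scale_sumr cl_mul_suml -big_split.
apply: eq_bigr => j _.
rewrite (clpartial_val (is_clpartialZ (ds j) (cl_derivableP (dF j)))).
by rewrite cl_mulDr !cl_mulZr cl_mulZl.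
Qed.

Lemma dirac_opB F G x : (forall j, cl_derivable F x j) -> (forall j, cl_derivable G x j) ->
  dirac_op (fun y => F y - G y) x = dirac_op F x - dirac_op G x.
Proof.
move=> dF dG; rewrite /dirac_op -sumrB; apply: eq_bigr => j _.
by rewrite (clpartial_val (is_clpartialB (cl_derivableP (dF j)) (cl_derivableP (dG j)))) cl_mulBr.
Qed.

End DiracOperator.

Lemma riccati_combination {R : realType} {n : nat} (g h Dg Dh V : cliff R n) (a s : R[i]) :
  s * (a - 1) = 1 -> Dg + cl_mul g g = V -> Dh + cl_mul h h = V ->
  let W := cl_scale a g - h in
  cl_mul (cl_scale (- (s ^+ 2 * a)) (g - h)) W +
    cl_scale s (cl_mul (cl_scale a (g - h)) g + cl_scale a Dg - Dh) +
    cl_mul (cl_scale s W) (cl_scale s W) = V.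
Proof.
move=> sa1 /(canRL (addrK _)) -> /(canRL (addrK _)) -> W; rewrite {}/W.
rewrite !(cl_mulBl, cl_mulBr, cl_mulZl, cl_mulZr).
move: (cl_mul g g) (cl_mul g h) (cl_mul h g) (cl_mul h h) => GG GH HG HH.
apply/ffunP => D; rewrite !ffunE; apply/eqP; rewrite -subr_eq0; apply/eqP.
set L := (X in X = 0).
have -> : L = (s * (a - 1) - 1) * (a * s * HG D - s * HH D + V D) by rewrite /L; ring.
by rewrite sa1 subrr mul0r.
Qed.

Theorem proposition5p2 (R : realType) (n : nat) (hn : (1 < n)%N)
  (Omega : set 'rV[R]_n) (hOmega : open Omega)
  (v phi1 phi2 : 'rV[R]_n -> R[i]) (K : R[i])
  (hphi1 : forall x, Omega x -> forall j, cl_cderivable phi1 x j)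
  (hphi2 : forall x, Omega x -> forall j, cl_cderivable phi2 x j)
  (hg : forall x, Omega x ->
          riccati_at v (dirac_op (fun y => cl_scal n (phi1 y))) x)
  (hh : forall x, Omega x ->
          riccati_at v (dirac_op (fun y => cl_scal n (phi2 y))) x) :
  let g := dirac_op (fun y => cl_scal n (phi1 y)) in
  let h := dirac_op (fun y => cl_scal n (phi2 y)) in
  let alpha := fun y => K * cl_exp (phi1 y - phi2 y) in
  let f := fun y => @cl_scale R n ((alpha y - 1)^-1) (@cl_scale R n (alpha y) (g y) - h y) in
  forall x, Omega x -> alpha x != 1 ->
    cl_is_vector (f x) /\ riccati_at v f x.
Proof.
move=> g h alpha f x Ox alpha_ne1.
have [dg Rg] := hg x Ox; have [dh Rh] := hh x Ox.
pose d1 j := cl_cpartial j phi1 x; pose d2 j := cl_cpartial j phi2 x.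
have Dphi1 j : is_cderive x (cl_dirj R j) phi1 (d1 j) := cderivableP (hphi1 x Ox j).
have Dphi2 j : is_cderive x (cl_dirj R j) phi2 (d2 j) := cderivableP (hphi2 x Ox j).
have g_vec : g x = cl_vec d1 := dirac_op_scal Dphi1.
have h_vec : h x = cl_vec d2 := dirac_op_scal Dphi2.
have grad_diff c : cl_vec (fun j => c * (d1 j - d2 j)) = cl_scale c (g x - h x).
  by rewrite g_vec h_vec cl_vecB cl_vecZ.
have Dalpha j : is_cderive x (cl_dirj R j) alpha (alpha x * (d1 j - d2 j)).
  have := is_cderiveM (is_cderive_cst K x _) (is_cderive_exp (is_cderiveB (Dphi1 j) (Dphi2 j))).
  by congr is_cderive; rewrite /alpha; ring.
pose s y := (alpha y - 1)^-1.
pose k := - (s x ^+ 2 * alpha x).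
have Ds j : is_cderive x (cl_dirj R j) s (k * (d1 j - d2 j)).
  have alpha1_neq0 : alpha x - 1 != 0 by rewrite subr_eq0.
  have := is_cderiveV alpha1_neq0 (is_cderiveB (Dalpha j) (is_cderive_cst 1 x _)).
  by congr is_cderive; rewrite /k /s exprVn; ring.
pose W y := cl_scale (alpha y) (g y) - h y.
have dW j : cl_derivable W x j := cl_derivableB (cl_derivableZ (Dalpha j) (dg j)) (dh j).
have DW : dirac_op W x = cl_mul (cl_scale (alpha x) (g x - h x)) (g x) +
    cl_scale (alpha x) (dirac_op g x) - dirac_op h x.
  have dAg j : cl_derivable (fun y => cl_scale (alpha y) (g y)) x j.
    exact: cl_derivableZ (Dalpha j) (dg j).
  by rewrite (dirac_opB dAg dh) (dirac_opZ Dalpha dg) grad_diff.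
have Df : dirac_op f x = cl_mul (cl_scale k (g x - h x)) (W x) + cl_scale (s x) (dirac_op W x).
  by rewrite (dirac_opZ Ds dW) grad_diff.
split.
  by rewrite /f /= g_vec h_vec cl_vecZ cl_vecB cl_vecZ; apply: cl_vec_is_vector.
split=> [j|]; first exact: cl_derivableZ (Ds j) (dW j).
by rewrite Df DW; apply: riccati_combination (mulVf _) Rg Rh; rewrite subr_eq0.
Qed.
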